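(* Let $\alpha=0$ and $\lambda\in\mathbb{N}$. Define functions $g(s;0,\lambda)$ by $g(s;0,0)=0$, $$g(s;0,1)=1-\frac{I_0^2(\sqrt s)}{I_1^2(\sqrt s)},$$ and, for $\lambda\ge1$, the difference equation in $\lambda$ $$\frac{1}{\sqrt{1-g(s;0,\lambda+1)}}+\frac{1}{\sqrt{1-g(s;0,\lambda-1)}}=-\frac{2\lambda\sqrt{1-g(s;0,\lambda)}}{\sqrt s\,g(s;0,\lambda)}.$$ Then for each positive integer $\lambda$, $g(s;0,\lambda)$ is an exact solution of $$\frac{d^2g}{ds^2}=\frac{3g-1}{2g(g-1)}\left(\frac{dg}{ds}\right)^2-\frac1s\frac{dg}{ds}-\frac{\lambda^2(g-1)^2}{2s^2g}+\frac{g}{2s}$$ (i.e. $P_V(0,-\frac{\lambda^2}{2},\frac12,0)$), and $$\mathcal{H}(s;0,\lambda)=\frac{(sg'(s;0,\lambda))^2}{4g(s;0,\lambda)(g(s;0,\lambda)-1)^2}-\frac{\lambda^2}{4g(s;0,\lambda)}+\frac{sg(s;0,\lambda)}{4(g(s;0,\lambda)-1)}$$ is the corresponding solution of $(s\mathcal{H}'')^2=\mathcal{H}'(4\mathcal{H}'-1)(\mathcal{H}-s\mathcal{H}')+\frac1{16}\left[4\lambda\mathcal{H}'-\lambda\right]^2$.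
   Context: $I_k$ denotes the modified Bessel function of the first kind of order $k$. *)

From Stdlib Require Import Reals Factorial.
From Coquelicot Require Import Coquelicot.
Open Scope R_scope.

(* Modified Bessel function of the first kind of order k:
   I_k(x) = sum_{m>=0} (x/2)^(2m+k) / (m! (m+k)!). *)
Definition besselI (k : nat) (x : R) : R :=
  (x / 2) ^ k *
  PSeries (fun m : nat => / INR (fact m * fact (m + k))) ((x / 2) ^ 2).

Definition g1 (s : R) : R :=
  1 - (besselI 0 (sqrt s)) ^ 2 / (besselI 1 (sqrt s)) ^ 2.

(* The difference equation solved for g(s;0,lam+1):
   1/sqrt(1 - g_{lam+1}) = X := -2 lam sqrt(1-g_lam)/(sqrt s g_lam) - 1/sqrt(1-g_{lam-1}),
   hence g_{lam+1} = 1 - 1/X^2. *)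
Definition gnext (lam gm g s : R) : R :=
  let X := - (2 * lam * sqrt (1 - g)) / (sqrt s * g) - / sqrt (1 - gm) in
  1 - / (X ^ 2).

(* gpair n s = (g(s;0,n), g(s;0,n+1)) *)
Fixpoint gpair (n : nat) (s : R) : R * R :=
  match n with
  | O => (0, g1 s)
  | S m => let (a, b) := gpair m s in (b, gnext (INR (S m)) a b s)
  end.

Definition g (lam : nat) (s : R) : R := fst (gpair lam s).

Definition Hfun (lam : nat) (s : R) : R :=
  let G := g lam s in
  let G' := Derive (g lam) s in
  (s * G') ^ 2 / (4 * G * (G - 1) ^ 2) - (INR lam) ^ 2 / (4 * G)
  + s * G / (4 * (G - 1)).

From Stdlib Require Import Reals Lra Lia Factorial.
From Coquelicot Require Import Coquelicot.
Open Scope R_scope.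

(* Write v_n = 1 / sqrt (1 - g(s;0,n)) and x = sqrt s.  Then v_0 = 1,
   v_1 = I_1(x) / I_0(x), and the difference equation becomes
   v_(n+1) = 2 n v_n / (x (1 - v_n^2)) - v_(n-1).  The pair (v_(n-1), v_n)
   satisfies a first-order system ([ladder_ode n]): for n = 1 it is the
   Riccati equation of the Bessel ratio, and the recurrence carries it from
   n to n + 1.  Both equations of the theorem are then algebraic identities
   in v_(n-1), v_n and x.  The analytic content is that 0 < v_n < 1 for all
   s > 0, which keeps the recurrence and g defined.  It is proved by
   induction on n: v_n solves a Riccati equation with coefficient
   v_(n-1) in (0, 1], and barrier arguments for that equation, started from
   v_n = O(x) as s -> 0, keep v_n between 0 and x / (n + 1). *)

Lemma sqrt_pos_sqr s : 0 < s -> 0 < sqrt s /\ sqrt s * sqrt s = s.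
Proof. intros Hs; split; [apply sqrt_lt_R0, Hs | apply sqrt_sqrt; lra]. Qed.

Lemma sqrt_lt_1_of_lt_1 t : 0 <= t < 1 -> sqrt t < 1.
Proof. intros Ht; rewrite <- sqrt_1; apply sqrt_lt_1_alt; lra. Qed.

Lemma pow_sqrt_le_sqrt n t : 0 < t < 1 -> 0 < sqrt t ^ S n <= sqrt t.
Proof.
  intros Ht; pose proof (sqrt_lt_R0 t (proj1 Ht)); pose proof (sqrt_lt_1_of_lt_1 t ltac:(lra)).
  assert (sqrt t ^ n <= 1) by (rewrite <- (pow1 n); apply pow_incr; lra).
  pose proof (pow_lt (sqrt t) n ltac:(lra)); simpl; split; nra.
Qed.

(** * Barrier arguments *)

Lemma locally_pos (P : R -> Prop) s : 0 < s -> (forall t, 0 < t -> P t) -> locally s P.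
Proof.
  intros Hs HP; apply (locally_interval _ s 0 p_infty Hs I).
  intros t Ht _; exact (HP t Ht).
Qed.

Lemma ex_derive_Derive_of_is_derive (f : R -> R) x l :
  is_derive f x l -> ex_derive (fun t => f t) x /\ Derive (fun t => f t) x = l.
Proof. intros H; split; [eexists; exact H | exact (is_derive_unique _ _ _ H)]. Qed.

Lemma is_derive_pos_left_lt (f : R -> R) x l a :
  is_derive f x l -> 0 < l -> a < x -> exists t, a <= t < x /\ f t < f x.
Proof.
  intros Hd Hl Hax; apply is_derive_Reals in Hd.
  destruct (Hd l Hl) as [[d Hd0] Hdl]; simpl in Hdl.
  set (h := - Rmin (d / 2) (x - a)).
  assert (0 < Rmin (d / 2) (x - a)) by (apply Rmin_pos; lra).
  pose proof (Rmin_l (d / 2) (x - a)); pose proof (Rmin_r (d / 2) (x - a)).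
  assert (Hh : h < 0) by (unfold h; lra).
  assert (Hq : Rabs ((f (x + h) - f x) / h - l) < l).
  { apply Hdl; [lra |]. unfold h; rewrite Rabs_Ropp, Rabs_pos_eq; lra. }
  exists (x + h); split; [unfold h; lra |].
  apply Rabs_lt_between in Hq.
  replace (f (x + h)) with (f x + (f (x + h) - f x) / h * h) by (field; lra).
  nra.
Qed.

(* The minimum of [f] on [[a, b]] is attained at [a] only: at any other
   minimum point, [0 < f'] would give smaller values just to its left. *)
Lemma lt_of_deriv_pos_on_nonpos (f f' : R -> R) a b : a < b ->
  (forall t, a <= t <= b -> is_derive f t (f' t)) ->
  (forall t, a <= t <= b -> f t <= 0 -> 0 < f' t) ->
  f b <= 0 -> f a < f b.
Proof.
  intros Hab Hd Hpos Hb.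
  destruct (continuity_ab_min f a b) as [m [Hmin Hm]]; [lra | |].
  { intros t Ht; apply continuity_pt_filterlim.
    apply (ex_derive_continuous (K := R_AbsRing) (V := R_NormedModule)).
    eexists; apply Hd, Ht. }
  assert (Hma : m = a).
  { destruct (Rle_lt_or_eq_dec a m ltac:(lra)) as [Ham | Ham]; [exfalso | congruence].
    assert (f m <= f b) by (apply Hmin; lra).
    destruct (is_derive_pos_left_lt f m (f' m) a) as [t [Ht Hft]];
      [apply Hd; lra | apply Hpos; lra | exact Ham |].
    specialize (Hmin t); lra. }
  subst m.
  destruct (is_derive_pos_left_lt f b (f' b) a) as [t [Ht Hft]];
    [apply Hd; lra | apply Hpos; lra | exact Hab |].
  specialize (Hmin t); lra.
Qed.

Lemma pos_of_deriv_pos_on_nonpos (f f' : R -> R) :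
  (forall t, 0 < t -> is_derive f t (f' t)) ->
  (forall t, 0 < t -> f t <= 0 -> 0 < f' t) ->
  (forall eps, 0 < eps -> exists d, 0 < d /\ forall t, 0 < t < d -> - eps < f t) ->
  forall b, 0 < b -> 0 < f b.
Proof.
  intros Hd Hpos Hlim b Hb; apply Rnot_le_lt; intros Hfb.
  assert (Hlt : forall a c, 0 < a < c -> f c <= 0 -> f a < f c).
  { intros a c Hac Hc; apply (lt_of_deriv_pos_on_nonpos f f'); try lra;
      intros; [apply Hd | apply Hpos]; lra. }
  assert (Hhalf : f (b / 2) < f b) by (apply Hlt; lra).
  destruct (Hlim (- f (b / 2))) as [d [Hd0 Hsmall]]; [lra |].
  set (t := Rmin d (b / 2) / 2).
  assert (0 < Rmin d (b / 2)) by (apply Rmin_pos; lra).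
  pose proof (Rmin_l d (b / 2)); pose proof (Rmin_r d (b / 2)).
  assert (f t < f (b / 2)) by (apply Hlt; unfold t; lra).
  assert (- - f (b / 2) < f t) by (apply Hsmall; unfold t; lra).
  lra.
Qed.

Lemma lower_limit_of_sqrt_bound (f : R -> R) K :
  (forall t, 0 < t < 1 -> - (K * sqrt t) <= f t) ->
  forall eps, 0 < eps -> exists d, 0 < d /\ forall t, 0 < t < d -> - eps < f t.
Proof.
  intros Hf eps Heps.
  pose proof (Rabs_pos K); pose proof (Rle_abs K).
  set (r := eps / (Rabs K + 1)).
  assert (Hr : 0 < r) by (apply Rdiv_lt_0_compat; lra).
  exists (Rmin 1 (r ^ 2)); split; [apply Rmin_pos; [lra | apply pow_lt, Hr] |].
  intros t [Ht Htd].
  pose proof (Rmin_l 1 (r ^ 2)); pose proof (Rmin_r 1 (r ^ 2)).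
  assert (Hx : sqrt t < r).
  { rewrite <- (sqrt_pow2 r) by lra; apply sqrt_lt_1_alt; lra. }
  pose proof (sqrt_pos t).
  assert (K * sqrt t < eps).
  { replace eps with ((Rabs K + 1) * r) by (unfold r; field; lra); nra. }
  specialize (Hf t ltac:(lra)); lra.
Qed.

(** * Bessel series *)

Lemma is_derive_PSeries_quarter (a : nat -> R) s :
  CV_radius a = p_infty ->
  is_derive (fun t => PSeries a (t / 4)) s (PSeries (PS_derive a) (s / 4) / 4).
Proof.
  intros Ha.
  replace (PSeries (PS_derive a) (s / 4) / 4)
    with (scal (/ 4) (PSeries (PS_derive a) (s / 4)))
    by (unfold scal; simpl; unfold mult; simpl; field).
  apply (is_derive_comp (PSeries a) (fun t => t / 4)).
  - apply is_derive_PSeries; rewrite Ha; exact I.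
  - auto_derive; [exact I | field].
Qed.

Lemma PSeries_le_coef (a b : nat -> R) y :
  (forall n, 0 <= a n <= b n) -> 0 <= y -> ex_pseries b y -> PSeries a y <= PSeries b y.
Proof.
  intros Hab Hy Hb; apply Series_le; [| now apply ex_pseries_R].
  intros n; destruct (Hab n); pose proof (pow_le y n Hy).
  split; [apply Rmult_le_pos | apply Rmult_le_compat_r]; lra.
Qed.

Lemma PSeries_ge_head (a : nat -> R) y :
  (forall n, 0 <= a n) -> 0 <= y -> ex_pseries a y -> a O <= PSeries a y.
Proof.
  intros Ha Hy Hex; rewrite PSeries_decr_1 by exact Hex.
  enough (0 <= PSeries (PS_decr_1 a) y) by nra.
  rewrite <- (PSeries_const_0 y); apply PSeries_le_coef; auto.
  - intros n; split; [lra | apply Ha].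
  - apply ex_pseries_decr_1; [| exact Hex].
    destruct (Req_dec y 0) as [-> | Hy0]; [now left | right].
    exists (/ y); unfold mult, one; simpl; field; exact Hy0.
Qed.

Definition bessel_coef (k n : nat) : R := / INR (fact n * fact (n + k)).

Lemma bessel_coef_pos k n : 0 < bessel_coef k n.
Proof.
  apply Rinv_0_lt_compat, lt_0_INR.
  pose proof (lt_O_fact n); pose proof (lt_O_fact (n + k)); nia.
Qed.

Lemma bessel_coef_succ k n :
  bessel_coef k (S n) = bessel_coef k n / (INR (S n) * INR (S (n + k))).
Proof.
  unfold bessel_coef; rewrite Nat.add_succ_l, !fact_simpl, !mult_INR.
  pose proof (INR_fact_lt_0 n); pose proof (INR_fact_lt_0 (n + k)).
  pose proof (pos_INR n); pose proof (pos_INR (n + k)).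
  rewrite !S_INR; field; lra.
Qed.

Lemma CV_radius_bessel_coef k : CV_radius (bessel_coef k) = p_infty.
Proof.
  apply CV_radius_infinite_DAlembert.
  { intros n; apply Rgt_not_eq, bessel_coef_pos. }
  apply is_lim_seq_le_le with (fun _ => 0) (fun n => / INR (S n)).
  - intros n; split; [apply Rabs_pos |].
    pose proof (bessel_coef_pos k n).
    assert (Hn : 1 <= INR (S n)) by (rewrite S_INR; pose proof (pos_INR n); lra).
    assert (Hnk : 1 <= INR (S (n + k))) by (rewrite S_INR; pose proof (pos_INR (n + k)); lra).
    rewrite bessel_coef_succ.
    replace (bessel_coef k n / (INR (S n) * INR (S (n + k))) / bessel_coef k n)
      with (/ (INR (S n) * INR (S (n + k)))) by (field; lra).
    rewrite Rabs_pos_eq by (apply Rlt_le, Rinv_0_lt_compat; nra).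
    apply Rinv_le_contravar; nra.
  - apply is_lim_seq_const.
  - apply (is_lim_seq_incr_1 (fun n => / INR n)).
    apply (is_lim_seq_inv _ p_infty); [apply is_lim_seq_INR | discriminate].
Qed.

Lemma PS_derive_bessel_coef k n : PS_derive (bessel_coef k) n = bessel_coef (S k) n.
Proof.
  unfold PS_derive; rewrite bessel_coef_succ; unfold bessel_coef.
  rewrite Nat.add_succ_r, fact_simpl, !mult_INR.
  pose proof (INR_fact_lt_0 n); pose proof (INR_fact_lt_0 (n + k)).
  pose proof (pos_INR n); pose proof (pos_INR (n + k)).
  rewrite !S_INR; field; lra.
Qed.

Lemma PS_derive_incr_1_bessel_coef n :
  PS_derive (PS_incr_1 (bessel_coef 1)) n = bessel_coef 0 n.
Proof.
  unfold PS_derive, PS_incr_1, bessel_coef.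
  rewrite Nat.add_0_r, Nat.add_1_r, fact_simpl, !mult_INR.
  pose proof (INR_fact_lt_0 n); pose proof (pos_INR n).
  rewrite S_INR; field; lra.
Qed.

Lemma ex_pseries_bessel_coef k y : ex_pseries (bessel_coef k) y.
Proof. apply CV_radius_inside; rewrite CV_radius_bessel_coef; exact I. Qed.

Lemma PSeries_bessel_coef_ge_1 k y : (k <= 1)%nat -> 0 <= y -> 1 <= PSeries (bessel_coef k) y.
Proof.
  intros Hk Hy.
  replace 1 with (bessel_coef k 0)
    by (unfold bessel_coef; destruct k as [| [|]]; simpl; [lra | lra | lia]).
  apply PSeries_ge_head; auto using ex_pseries_bessel_coef.
  intros n; apply Rlt_le, bessel_coef_pos.
Qed.

Lemma PSeries_bessel_coef_antitone k y :
  0 <= y -> PSeries (bessel_coef (S k)) y <= PSeries (bessel_coef k) y.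
Proof.
  intros Hy; apply PSeries_le_coef; auto using ex_pseries_bessel_coef.
  intros n; split; [apply Rlt_le, bessel_coef_pos |].
  unfold bessel_coef; apply Rinv_le_contravar.
  - apply lt_0_INR; pose proof (lt_O_fact n); pose proof (lt_O_fact (n + k)); nia.
  - apply le_INR, Nat.mul_le_mono_l, fact_le; lia.
Qed.

Lemma is_derive_bessel_series k s :
  is_derive (fun t => PSeries (bessel_coef k) (t / 4)) s
    (PSeries (bessel_coef (S k)) (s / 4) / 4).
Proof.
  rewrite <- (PSeries_ext _ _ (s / 4) (PS_derive_bessel_coef k)).
  apply is_derive_PSeries_quarter, CV_radius_bessel_coef.
Qed.

Lemma is_derive_bessel_series_incr s :
  is_derive (fun t => PSeries (PS_incr_1 (bessel_coef 1)) (t / 4)) s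
    (PSeries (bessel_coef 0) (s / 4) / 4).
Proof.
  rewrite <- (PSeries_ext _ _ (s / 4) PS_derive_incr_1_bessel_coef).
  apply is_derive_PSeries_quarter; rewrite CV_radius_incr_1; apply CV_radius_bessel_coef.
Qed.

Lemma besselI_sqrt k s :
  0 <= s -> besselI k (sqrt s) = (sqrt s / 2) ^ k * PSeries (bessel_coef k) (s / 4).
Proof.
  intros Hs; unfold besselI; do 2 f_equal.
  replace ((sqrt s / 2) ^ 2) with (sqrt s ^ 2 / 4) by field.
  now rewrite pow2_sqrt.
Qed.

Definition bessel_ratio (s : R) : R := besselI 1 (sqrt s) / besselI 0 (sqrt s).

Lemma bessel_ratio_bounds s : 0 < s -> 0 < bessel_ratio s <= sqrt s / 2.
Proof.
  intros Hs; destruct (sqrt_pos_sqr s Hs) as [Hx _].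
  unfold bessel_ratio; rewrite !besselI_sqrt by lra.
  assert (H0 := PSeries_bessel_coef_ge_1 0 (s / 4) (le_0_n 1) ltac:(lra)).
  assert (H1 := PSeries_bessel_coef_ge_1 1 (s / 4) (le_n 1) ltac:(lra)).
  assert (H10 := PSeries_bessel_coef_antitone 0 (s / 4) ltac:(lra)).
  set (P0 := PSeries (bessel_coef 0) (s / 4)) in *.
  set (P1 := PSeries (bessel_coef 1) (s / 4)) in *.
  replace ((sqrt s / 2) ^ 1 * P1 / ((sqrt s / 2) ^ 0 * P0)) with (sqrt s / 2 * (P1 / P0))
    by (field; lra).
  assert (0 < P1 / P0 <= 1) by (split; [apply Rdiv_lt_0_compat | apply (Rdiv_le_1 P1 P0)]; lra).
  split; nra.
Qed.

(** * A Riccati barrier *)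

Definition raise_rate (k : R) (A B : R -> R) (s : R) : R :=
  / (2 * sqrt s) * ((k - 1) / sqrt s * A s - (1 - A s ^ 2) * B s).

Definition lower_rate (k : R) (A B : R -> R) (s : R) : R :=
  / (2 * sqrt s) * ((1 - B s ^ 2) * A s - k / sqrt s * B s).

(* [A] and [B] play the roles of v_(k-1) and v_k. *)
Definition ladder_ode (k : R) (A B : R -> R) (s : R) : Prop :=
  is_derive A s (raise_rate k A B s) /\ is_derive B s (lower_rate k A B s).

Lemma is_derive_bessel_ratio s : 0 < s ->
  is_derive bessel_ratio s (lower_rate 1 (fun _ => 1) bessel_ratio s).
Proof.
  intros Hs.
  set (P0 := fun t => PSeries (bessel_coef 0) (t / 4)).
  set (Q := fun t => PSeries (PS_incr_1 (bessel_coef 1)) (t / 4)).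
  (* [2 Q t = sqrt t * I_1 (sqrt t)] differentiates termwise to
     [P0 t / 4 = I_0 (sqrt t) / 4], so no Bessel recurrence is needed. *)
  assert (Hratio : forall t, 0 < t -> bessel_ratio t = 2 * Q t / (sqrt t * P0 t)).
  { intros t Ht; destruct (sqrt_pos_sqr t Ht) as [Hx Hxx].
    assert (1 <= P0 t) by (apply PSeries_bessel_coef_ge_1; lia || lra).
    unfold bessel_ratio, Q, P0 in *; rewrite !besselI_sqrt, PSeries_incr_1 by lra.
    set (A := PSeries (bessel_coef 0) (t / 4)) in *.
    set (B := PSeries (bessel_coef 1) (t / 4)).
    rewrite <- Hxx at 3; field; lra. }
  destruct (sqrt_pos_sqr s Hs) as [Hx Hxx].
  assert (HP0 : 1 <= P0 s) by (apply PSeries_bessel_coef_ge_1; lia || lra).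
  assert (HQ : Q s = s / 4 * PSeries (bessel_coef 1) (s / 4)) by apply PSeries_incr_1.
  assert (dP0 : Derive P0 s = Q s / s).
  { rewrite HQ; replace (s / 4 * _ / s) with (PSeries (bessel_coef 1) (s / 4) / 4) by (field; lra).
    apply is_derive_unique, is_derive_bessel_series. }
  assert (dQ : Derive Q s = P0 s / 4) by apply is_derive_unique, is_derive_bessel_series_incr.
  assert (eP0 : ex_derive P0 s) by (eexists; apply is_derive_bessel_series).
  assert (eQ : ex_derive Q s) by (eexists; apply is_derive_bessel_series_incr).
  apply (is_derive_ext_loc (fun t => 2 * Q t / (sqrt t * P0 t))).
  { apply locally_pos; [exact Hs |]; intros t Ht; symmetry; now apply Hratio. }
  unfold lower_rate; rewrite (Hratio s Hs).
  auto_derive.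
  - repeat split; auto. apply Rgt_not_eq; nra.
  - change (fun x => Q x) with Q; change (fun x => P0 x) with P0.
    rewrite dP0, dQ; set (q := Q s) in *; set (p := P0 s) in *; set (x := sqrt s) in *.
    rewrite <- Hxx; field; split; lra.
Qed.

(* [sqrt t ^ S n * c t] has derivative [sqrt t ^ n / 2 * (1 - c t ^ 2) * p t],
   so it increases while [-1 < c t < 1]; comparing it with
   [sqrt t ^ S (S n) / (n + 2)] bounds [c t] by [sqrt t / (n + 2)]. *)
Section Riccati.

Variables (n : nat) (p c : R -> R) (M : R).
Hypothesis p_bounds : forall t, 0 < t -> 0 < p t <= 1.
Hypothesis c_ode : forall t, 0 < t -> is_derive c t (lower_rate (INR (S n)) p c t).
Hypothesis c_gt_m1 : forall t, 0 < t -> -1 < c t.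
Hypothesis c_le_M : forall t, 0 < t < 1 -> c t <= M.

Lemma is_derive_riccati_weighted t : 0 < t ->
  is_derive (fun t => sqrt t ^ S n * c t) t (sqrt t ^ n / 2 * ((1 - c t ^ 2) * p t)).
Proof.
  intros Ht; destruct (sqrt_pos_sqr t Ht) as [Hx _].
  destruct (ex_derive_Derive_of_is_derive _ _ _ (c_ode t Ht)) as [ec dc].
  auto_derive; [auto |].
  rewrite dc; unfold lower_rate.
  change (match n with 0%nat => 1 | S _ => INR n + 1 end) with (INR (S n)).
  simpl pow; field; lra.
Qed.

Lemma riccati_pos t : 0 < t -> 0 < c t.
Proof.
  intros Ht.
  enough (0 < sqrt t ^ S n * c t) by (pose proof (pow_lt (sqrt t) (S n) (sqrt_lt_R0 t Ht)); nra).
  revert t Ht; apply (pos_of_deriv_pos_on_nonpos _ _ is_derive_riccati_weighted).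
  - intros t Ht Hu; pose proof (pow_lt (sqrt t) (S n) (sqrt_lt_R0 t Ht)).
    pose proof (pow_lt (sqrt t) n (sqrt_lt_R0 t Ht)).
    specialize (c_gt_m1 t Ht); specialize (p_bounds t Ht).
    assert (c t <= 0) by nra.
    apply Rmult_lt_0_compat; [lra | apply Rmult_lt_0_compat; nra].
  - apply (lower_limit_of_sqrt_bound _ 1); intros t Ht.
    pose proof (pow_sqrt_le_sqrt n t Ht); specialize (c_gt_m1 t ltac:(lra)); nra.
Qed.

Lemma riccati_lt_sqrt t : 0 < t -> c t < sqrt t / (INR (S n) + 1).
Proof.
  intros Ht.
  pose proof (pos_INR (S n)).
  set (f t := sqrt t ^ S (S n) / (INR (S n) + 1) - sqrt t ^ S n * c t).
  assert (Hf : 0 < f t).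
  { revert t Ht.
    apply (pos_of_deriv_pos_on_nonpos f (fun t => sqrt t ^ n / 2 * (1 - (1 - c t ^ 2) * p t))).
    - intros t Ht; destruct (sqrt_pos_sqr t Ht) as [Hx _].
      destruct (ex_derive_Derive_of_is_derive _ _ _ (c_ode t Ht)) as [ec dc].
      unfold f; auto_derive; [auto |].
      rewrite dc; unfold lower_rate.
      change (match n with 0%nat => 1 | S _ => INR n + 1 end) with (INR (S n)).
      field; split; lra.
    - intros t Ht _; pose proof (pow_lt (sqrt t) n (sqrt_lt_R0 t Ht)).
      pose proof (riccati_pos t Ht); specialize (p_bounds t Ht).
      assert (0 < c t ^ 2 * p t) by (apply Rmult_lt_0_compat; [apply pow_lt |]; lra).
      apply Rmult_lt_0_compat; nra.
    - apply (lower_limit_of_sqrt_bound _ (Rabs M)); intros t Ht.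
      pose proof (pow_sqrt_le_sqrt n t Ht); specialize (c_le_M t Ht).
      pose proof (Rle_abs M); pose proof (Rabs_pos M).
      assert (0 <= sqrt t ^ S (S n) / (INR (S n) + 1)).
      { apply Rmult_le_pos; [apply pow_le, sqrt_pos | apply Rlt_le, Rinv_0_lt_compat; lra]. }
      unfold f; nra. }
  pose proof (pow_lt (sqrt t) (S n) (sqrt_lt_R0 t Ht)).
  apply (Rmult_lt_reg_l (sqrt t ^ S n)); [lra |].
  unfold f in Hf; simpl pow in *.
  replace (sqrt t * sqrt t ^ n * (sqrt t / (INR (S n) + 1)))
    with (sqrt t * (sqrt t * sqrt t ^ n) / (INR (S n) + 1)) by (field; lra).
  lra.
Qed.

Lemma riccati_lt_1 t : 0 < t -> c t < 1.
Proof.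
  intros Ht.
  enough (0 < 1 - c t) by lra.
  revert t Ht; apply (pos_of_deriv_pos_on_nonpos _ (fun t => - lower_rate (INR (S n)) p c t)).
  - intros t Ht; destruct (ex_derive_Derive_of_is_derive _ _ _ (c_ode t Ht)) as [ec dc].
    auto_derive; [exact ec | rewrite dc; ring].
  - intros t Ht Hc; destruct (sqrt_pos_sqr t Ht) as [Hx _].
    specialize (p_bounds t Ht); pose proof (lt_0_INR (S n) (Nat.lt_0_succ n)).
    assert (0 < INR (S n) / sqrt t * c t)
      by (apply Rmult_lt_0_compat; [apply Rdiv_lt_0_compat |]; lra).
    assert (0 < / (2 * sqrt t)) by (apply Rinv_0_lt_compat; lra).
    assert (1 <= c t ^ 2) by nra.
    assert ((1 - c t ^ 2) * p t <= 0) by nra.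
    unfold lower_rate; nra.
  - apply (lower_limit_of_sqrt_bound _ 0); intros t Ht.
    pose proof (riccati_lt_sqrt t ltac:(lra)); pose proof (sqrt_lt_1_of_lt_1 t ltac:(lra)).
    pose proof (pos_INR (S n)).
    assert (sqrt t / (INR (S n) + 1) <= sqrt t).
    { apply Rle_div_l; [lra |]; pose proof (sqrt_pos t); nra. }
    lra.
Qed.

End Riccati.

(** * The sequence v_n *)

Definition ladder_next (k : R) (A B : R -> R) (s : R) : R :=
  2 * k * B s / (sqrt s * (1 - B s ^ 2)) - A s.

Lemma ladder_ode_next k A B s : 0 < s -> 1 - B s ^ 2 <> 0 ->
  ladder_ode k A B s -> ladder_ode (k + 1) B (ladder_next k A B) s.
Proof.
  intros Hs HB [HA' HB']; destruct (sqrt_pos_sqr s Hs) as [Hx _].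
  split.
  - replace (raise_rate (k + 1) B (ladder_next k A B) s) with (lower_rate k A B s); [exact HB' |].
    unfold raise_rate, lower_rate, ladder_next; field; split; lra.
  - destruct (ex_derive_Derive_of_is_derive _ _ _ HA') as [eA dA].
    destruct (ex_derive_Derive_of_is_derive _ _ _ HB') as [eB dB].
    unfold ladder_next, lower_rate; auto_derive.
    + repeat split; auto; apply Rmult_integral_contrapositive; split; lra.
    + rewrite dA, dB; unfold raise_rate, lower_rate; field; split; lra.
Qed.

(* [ladder n s] is v_n = 1 / sqrt (1 - g n s), see [g_ladder]. *)
Fixpoint ladder (n : nat) (s : R) : R :=
  match n with
  | O => 1
  | S O => bessel_ratio s
  | S (S m as n') => ladder_next (INR n') (ladder m) (ladder n') s
  end.

Definition ladder_inv (m : nat) (A B : R -> R) : Prop :=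
  forall s, 0 < s ->
    (0 < A s <= 1 /\ 0 < B s < 1 /\ B s < sqrt s / (INR (S m) + 1)) /\
    ladder_ode (INR (S m)) A B s.

Lemma ladder_inv_0 : ladder_inv 0 (ladder 0) (ladder 1).
Proof.
  assert (Hpos : forall t, 0 < t -> 0 < bessel_ratio t)
    by (intros t Ht; apply bessel_ratio_bounds, Ht).
  assert (Hgt : forall t, 0 < t -> -1 < bessel_ratio t)
    by (intros t Ht; specialize (Hpos t Ht); lra).
  assert (Hle : forall t, 0 < t < 1 -> bessel_ratio t <= 1 / 2).
  { intros t Ht; pose proof (bessel_ratio_bounds t (proj1 Ht)).
    pose proof (sqrt_lt_1_of_lt_1 t ltac:(lra)); lra. }
  assert (Hp : forall t, 0 < t -> 0 < 1 <= 1) by (intros; lra).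
  intros s Hs; split; [split; [| split; [split |]] | split].
  - cbn; lra.
  - apply Hpos, Hs.
  - exact (riccati_lt_1 0 _ _ _ Hp is_derive_bessel_ratio Hgt Hle s Hs).
  - exact (riccati_lt_sqrt 0 _ _ _ Hp is_derive_bessel_ratio Hgt Hle s Hs).
  - replace (raise_rate (INR 1) (ladder 0) (ladder 1) s) with 0
      by (unfold raise_rate, Rdiv; cbn [ladder INR]; ring).
    exact (is_derive_const (K := R_AbsRing) (V := R_NormedModule) 1 s).
  - apply is_derive_bessel_ratio, Hs.
Qed.

Lemma ladder_inv_succ m A B :
  ladder_inv m A B -> ladder_inv (S m) B (ladder_next (INR (S m)) A B).
Proof.
  intros Hinv.
  set (C := ladder_next (INR (S m)) A B).
  pose proof (lt_0_INR (S m) (Nat.lt_0_succ m)) as Hk.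
  assert (HB : forall t, 0 < t -> 1 - B t ^ 2 <> 0).
  { intros t Ht; destruct (Hinv t Ht) as [[_ [HB1 _]] _]; nra. }
  assert (Hode : forall t, 0 < t -> ladder_ode (INR (S (S m))) B C t).
  { intros t Ht; rewrite (S_INR (S m)); apply ladder_ode_next; auto; apply Hinv, Ht. }
  assert (Hp : forall t, 0 < t -> 0 < B t <= 1).
  { intros t Ht; destruct (Hinv t Ht) as [[_ [HB1 _]] _]; lra. }
  assert (Hgt : forall t, 0 < t -> -1 < C t).
  { intros t Ht; destruct (Hinv t Ht) as [[HA [HB1 _]] _]; destruct (sqrt_pos_sqr t Ht) as [Hx _].
    assert (0 < 2 * INR (S m) * B t / (sqrt t * (1 - B t ^ 2))).
    { apply Rdiv_lt_0_compat; [nra | apply Rmult_lt_0_compat; nra]. }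
    unfold C, ladder_next; lra. }
  assert (Hle : forall t, 0 < t < 1 -> C t <= 3).
  { intros t Ht; destruct (Hinv t (proj1 Ht)) as [[HA [HB1 HB2]] _].
    destruct (sqrt_pos_sqr t (proj1 Ht)) as [Hx _]; pose proof (sqrt_lt_1_of_lt_1 t ltac:(lra)).
    apply Rlt_div_r in HB2; [| lra].
    assert (2 * INR (S m) * B t / (sqrt t * (1 - B t ^ 2)) <= 3).
    { apply Rle_div_l; [apply Rmult_lt_0_compat; nra | nra]. }
    unfold C, ladder_next; lra. }
  intros s Hs; split; [| apply Hode, Hs].
  split; [apply Hp, Hs | split; [split |]].
  - apply (riccati_pos (S m) B C); auto; apply Hode.
  - apply (riccati_lt_1 (S m) B C 3); auto; apply Hode.
  - apply (riccati_lt_sqrt (S m) B C 3); auto; apply Hode.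
Qed.

Lemma ladder_inv_all m : ladder_inv m (ladder m) (ladder (S m)).
Proof. induction m as [| m IH]; [exact ladder_inv_0 | exact (ladder_inv_succ m _ _ IH)]. Qed.

Definition ladder_to_g (v : R) : R := 1 - / v ^ 2.

Lemma g1_bessel_ratio s : 0 < s -> g1 s = ladder_to_g (bessel_ratio s).
Proof.
  intros Hs; pose proof (proj1 (bessel_ratio_bounds s Hs)) as Hr.
  unfold g1, ladder_to_g; unfold bessel_ratio in *.
  destruct (Req_dec (besselI 0 (sqrt s)) 0) as [H0 | H0].
  { rewrite H0, Rdiv_0_r in Hr; lra. }
  destruct (Req_dec (besselI 1 (sqrt s)) 0) as [H1 | H1].
  { rewrite H1, Rdiv_0_l in Hr; lra. }
  field; auto.
Qed.

Lemma gnext_ladder_to_g k a b s : 0 < s -> 0 < a -> 0 < b < 1 ->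
  gnext k (ladder_to_g a) (ladder_to_g b) s
  = ladder_to_g (2 * k * b / (sqrt s * (1 - b ^ 2)) - a).
Proof.
  intros Hs Ha Hb; destruct (sqrt_pos_sqr s Hs) as [Hx _].
  unfold gnext, ladder_to_g.
  replace (1 - (1 - / a ^ 2)) with ((/ a) ^ 2) by (field; lra).
  replace (1 - (1 - / b ^ 2)) with ((/ b) ^ 2) by (field; lra).
  rewrite !sqrt_pow2 by (apply Rlt_le, Rinv_0_lt_compat; lra).
  assert (1 - b ^ 2 <> 0) by nra.
  do 3 f_equal; field; repeat split; lra.
Qed.

Lemma gpair_ladder n s : 0 < s ->
  gpair n s = (ladder_to_g (ladder n s), ladder_to_g (ladder (S n) s)).
Proof.
  intros Hs; induction n as [| n IH].
  - cbn [gpair]; rewrite g1_bessel_ratio by exact Hs.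
    f_equal; unfold ladder_to_g; cbn; field.
  - cbn [gpair]; rewrite IH; f_equal.
    destruct (ladder_inv_all n s Hs) as [[[Ha _] [Hb _]] _].
    exact (gnext_ladder_to_g _ _ _ _ Hs Ha Hb).
Qed.

Lemma g_ladder n s : 0 < s -> g n s = ladder_to_g (ladder n s).
Proof. intros Hs; unfold g; rewrite gpair_ladder by exact Hs; reflexivity. Qed.

(** * Painleve V and its sigma form *)

(* [Hfun lam] is [sigma_hamiltonian (INR lam) (g lam)]. *)
Definition sigma_hamiltonian (k : R) (G : R -> R) (s : R) : R :=
  (s * Derive G s) ^ 2 / (4 * G s * (G s - 1) ^ 2) - k ^ 2 / (4 * G s)
  + s * G s / (4 * (G s - 1)).

Section PainleveV.

Variables (k : R) (A B G : R -> R).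
Hypothesis B_bounds : forall t, 0 < t -> 0 < B t < 1.
Hypothesis AB_ode : forall t, 0 < t -> ladder_ode k A B t.
Hypothesis G_eq : forall t, 0 < t -> G t = ladder_to_g (B t).

Lemma is_derive_ladder_to_g t : 0 < t -> is_derive G t (2 * lower_rate k A B t / B t ^ 3).
Proof.
  intros Ht; specialize (B_bounds t Ht).
  destruct (ex_derive_Derive_of_is_derive _ _ _ (proj2 (AB_ode t Ht))) as [eB dB].
  apply (is_derive_ext_loc (fun t => 1 - / B t ^ 2)).
  { apply locally_pos; [exact Ht |]; intros u Hu; symmetry; now apply G_eq. }
  auto_derive; [repeat split; auto; apply Rgt_not_eq; nra |].
  rewrite dB; field; lra.
Qed.

Lemma painleve_V s : 0 < s ->
  ex_derive G s /\ ex_derive (Derive G) s /\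
  Derive (Derive G) s =
    (3 * G s - 1) / (2 * G s * (G s - 1)) * Derive G s ^ 2 - / s * Derive G s
    - k ^ 2 * (G s - 1) ^ 2 / (2 * s ^ 2 * G s) + G s / (2 * s).
Proof.
  intros Hs; destruct (sqrt_pos_sqr s Hs) as [Hx Hxx]; pose proof (B_bounds s Hs) as HB.
  destruct (AB_ode s Hs) as [HA' HB'].
  destruct (ex_derive_Derive_of_is_derive _ _ _ HA') as [eA dA].
  destruct (ex_derive_Derive_of_is_derive _ _ _ HB') as [eB dB].
  evar (d2 : R).
  assert (HG' : is_derive (fun t => 2 * lower_rate k A B t / B t ^ 3) s d2).
  { assert (0 < B s * (B s * (B s * 1))) by (apply (pow_lt (B s) 3); lra).
    unfold lower_rate; auto_derive; [repeat split; auto; apply Rgt_not_eq; lra |].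
    rewrite dA, dB; unfold d2; reflexivity. }
  assert (HG'_loc : locally s (fun t => 2 * lower_rate k A B t / B t ^ 3 = Derive G t)).
  { apply locally_pos; [exact Hs |]; intros t Ht.
    symmetry; apply is_derive_unique, is_derive_ladder_to_g, Ht. }
  apply (is_derive_ext_loc _ _ _ _ HG'_loc) in HG'.
  split; [eexists; apply is_derive_ladder_to_g, Hs |].
  split; [eexists; exact HG' |].
  rewrite (is_derive_unique _ _ _ HG'), (is_derive_unique _ _ _ (is_derive_ladder_to_g s Hs)),
    G_eq by exact Hs.
  unfold d2, raise_rate, lower_rate, ladder_to_g.
  set (a := A s) in *; set (b := B s) in *; set (x := sqrt s) in *.
  rewrite <- Hxx; field; repeat split; nra.
Qed.

Lemma sigma_hamiltonian_ladder t : 0 < t ->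
  sigma_hamiltonian k G t = (t * (1 - A t ^ 2) * (1 - B t ^ 2) + 2 * k * sqrt t * A t * B t) / 4.
Proof.
  intros Ht; destruct (sqrt_pos_sqr t Ht) as [Hx Hxx]; pose proof (B_bounds t Ht).
  unfold sigma_hamiltonian.
  rewrite (is_derive_unique _ _ _ (is_derive_ladder_to_g t Ht)), G_eq by exact Ht.
  unfold lower_rate, ladder_to_g.
  set (a := A t) in *; set (b := B t) in *; set (x := sqrt t) in *.
  rewrite <- Hxx; field; repeat split; nra.
Qed.

Lemma is_derive_sigma_hamiltonian t : 0 < t ->
  is_derive (sigma_hamiltonian k G) t ((1 - B t ^ 2) / 4).
Proof.
  intros Ht; destruct (sqrt_pos_sqr t Ht) as [Hx Hxx].
  destruct (AB_ode t Ht) as [HA' HB'].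
  destruct (ex_derive_Derive_of_is_derive _ _ _ HA') as [eA dA].
  destruct (ex_derive_Derive_of_is_derive _ _ _ HB') as [eB dB].
  apply (is_derive_ext_loc
    (fun t => (t * (1 - A t ^ 2) * (1 - B t ^ 2) + 2 * k * sqrt t * A t * B t) / 4)).
  { apply locally_pos; [exact Ht |]; intros u Hu.
    symmetry; apply sigma_hamiltonian_ladder, Hu. }
  auto_derive; [repeat split; auto |].
  rewrite dA, dB; unfold raise_rate, lower_rate.
  set (a := A t) in *; set (b := B t) in *; set (x := sqrt t) in *.
  rewrite <- Hxx; field; lra.
Qed.

Lemma sigma_form s : 0 < s ->
  ex_derive (sigma_hamiltonian k G) s /\
  ex_derive (Derive (sigma_hamiltonian k G)) s /\
  (s * Derive (Derive (sigma_hamiltonian k G)) s) ^ 2 =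
    Derive (sigma_hamiltonian k G) s * (4 * Derive (sigma_hamiltonian k G) s - 1)
      * (sigma_hamiltonian k G s - s * Derive (sigma_hamiltonian k G) s)
    + / 16 * (4 * k * Derive (sigma_hamiltonian k G) s - k) ^ 2.
Proof.
  intros Hs; destruct (sqrt_pos_sqr s Hs) as [Hx Hxx].
  destruct (ex_derive_Derive_of_is_derive _ _ _ (proj2 (AB_ode s Hs))) as [eB dB].
  assert (HH' : is_derive (Derive (sigma_hamiltonian k G)) s
    (- (2 * B s * lower_rate k A B s) / 4)).
  { apply (is_derive_ext_loc (fun t => (1 - B t ^ 2) / 4)).
    { apply locally_pos; [exact Hs |]; intros t Ht.
      symmetry; apply is_derive_unique, is_derive_sigma_hamiltonian, Ht. }
    auto_derive; [exact eB | rewrite dB; field]. }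
  split; [eexists; apply is_derive_sigma_hamiltonian, Hs |].
  split; [eexists; exact HH' |].
  rewrite (is_derive_unique _ _ _ HH'), (is_derive_unique _ _ _ (is_derive_sigma_hamiltonian s Hs)),
    sigma_hamiltonian_ladder by exact Hs.
  unfold lower_rate.
  set (a := A s); set (b := B s); set (x := sqrt s) in *.
  rewrite <- Hxx; field; lra.
Qed.

End PainleveV.

Theorem theorem9 :
  forall lam : nat, (1 <= lam)%nat ->
    (* g(s;0,lam) is a (twice differentiable) solution of P_V(0,-lam^2/2,1/2,0) on s > 0 *)
    (forall s, 0 < s ->
       ex_derive (g lam) s /\ ex_derive (Derive (g lam)) s /\
       let G := g lam s in
       let G' := Derive (g lam) s in
       Derive (Derive (g lam)) s =
         (3 * G - 1) / (2 * G * (G - 1)) * G' ^ 2 - / s * G'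
         - (INR lam) ^ 2 * (G - 1) ^ 2 / (2 * s ^ 2 * G) + G / (2 * s)) /\
    (* H(s;0,lam) solves the sigma-form equation on s > 0 *)
    (forall s, 0 < s ->
       ex_derive (Hfun lam) s /\ ex_derive (Derive (Hfun lam)) s /\
       let H := Hfun lam s in
       let H' := Derive (Hfun lam) s in
       let H'' := Derive (Derive (Hfun lam)) s in
       (s * H'') ^ 2 =
         H' * (4 * H' - 1) * (H - s * H')
         + / 16 * (4 * INR lam * H' - INR lam) ^ 2).
Proof.
  intros [| m] Hlam; [lia |].
  assert (HB : forall t, 0 < t -> 0 < ladder (S m) t < 1)
    by (intros t Ht; apply (ladder_inv_all m t Ht)).
  assert (Hode : forall t, 0 < t -> ladder_ode (INR (S m)) (ladder m) (ladder (S m)) t)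
    by (intros t Ht; apply (ladder_inv_all m t Ht)).
  assert (Hg : forall t, 0 < t -> g (S m) t = ladder_to_g (ladder (S m) t))
    by (intros t Ht; apply g_ladder, Ht).
  split; intros s Hs.
  - exact (painleve_V _ _ _ _ HB Hode Hg s Hs).
  - exact (sigma_form _ _ _ _ HB Hode Hg s Hs).
Qed.
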